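(* Let $K$ be a triangle and $k\ge1$ an integer. Let $V(K)=\mathcal P_k(K)$, $\bm W(K)=[\mathcal P_k(K)]^2$, and $\bm M(\partial K)=\{\bm\mu:\bm\mu|_F=\bm n\times p_k\text{ for some }p_k\in\mathcal P_k(F),\text{ for each edge }F\subset\partial K\}$. Then $I_M(V(K)\times\bm W(K))=0$.
   Context: $\mathcal P_k$ denotes polynomials of total degree at most $k$. Conventions in 2D: $\nabla\times\bm v=-\partial_yv_1+\partial_xv_2$, $\nabla\times p=(\partial_yp,-\partial_xp)^T$, $\bm n\times\bm v=-n_2v_1+n_1v_2$, $\bm n\times p=(n_2p,-n_1p)^T$, $\bm n\times\bm w\times\bm n:=\bm w-(\bm w\cdot\bm n)\bm n$, $\bm n$ the unit outward normal. $I_M(V(K)\times\bm W(K)):=\dim\bm M(\partial K)-\dim\{\bm n\times v|_{\partial K}:v\in V(K),\nabla\times v=\bm0\}-\dim\{\bm n\times\bm w\times\bm n|_{\partial K}:\bm w\in\bm W(K),\nabla\times\bm w=0\}$. *)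

(* Setting of Lemma 5.2: a triangle K in R^2 (R a real closed
   field, so that unit normals exist), polynomial spaces of degree <= k, and
   dimensions of spaces of (piecewise) functions on the boundary of K. *)
From HB Require Import structures.
From mathcomp Require Import all_boot all_order all_algebra.
Set Implicit Arguments. Unset Strict Implicit. Unset Printing Implicit Defensive.
Import Order.TTheory GRing.Theory Num.Theory.
Local Open Scope ring_scope.

Section Defs.
Variable R : rcfType.

Definition peval (k : nat) (a : nat -> nat -> R) (z : R * R) : R :=
  \sum_(i < k.+1) \sum_(j < k.+1 | (i + j <= k)%N) a i j * z.1 ^+ i * z.2 ^+ j.

Definition pdx (k : nat) (a : nat -> nat -> R) (z : R * R) : R :=
  \sum_(i < k.+1) \sum_(j < k.+1 | (i + j <= k)%N)
     a i j * i%:R * z.1 ^+ (i.-1) * z.2 ^+ j.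
Definition pdy (k : nat) (a : nat -> nat -> R) (z : R * R) : R :=
  \sum_(i < k.+1) \sum_(j < k.+1 | (i + j <= k)%N)
     a i j * j%:R * z.1 ^+ i * z.2 ^+ (j.-1).

Definition cross2 (p q : R * R) : R := p.1 * q.2 - p.2 * q.1.
Definition vsub (p q : R * R) : R * R := (p.1 - q.1, p.2 - q.2).

Definition triangle_nondeg (v : 'I_3 -> R * R) : Prop :=
  cross2 (vsub (v (inord 1)) (v (inord 0))) (vsub (v (inord 2)) (v (inord 0))) != 0.

(* edge i goes from v i to v (i+1 mod 3); the opposite vertex is v (i+2 mod 3) *)
Definition nxt (i : 'I_3) : 'I_3 := inord ((i.+1) %% 3).
Definition edge_dir (v : 'I_3 -> R * R) (i : 'I_3) : R * R := vsub (v (nxt i)) (v i).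

(* parametrization of the (relatively open) edge i, t in ]0,1[ *)
Definition epos (v : 'I_3 -> R * R) (i : 'I_3) (t : R) : R * R :=
  ((v i).1 + t * (edge_dir v i).1, (v i).2 + t * (edge_dir v i).2).

(* unit outward normal to edge i *)
Definition enormal (v : 'I_3 -> R * R) (i : 'I_3) : R * R :=
  let d := edge_dir v i in
  let q := vsub (v (nxt (nxt i))) (v i) in
  let m := (d.2, - d.1) in
  let s := if m.1 * q.1 + m.2 * q.2 < 0 then 1 else -1 in
  let l := Num.sqrt (d.1 ^+ 2 + d.2 ^+ 2) in
  (s * m.1 / l, s * m.2 / l).

(* 2D cross products, conventions of the paper *)
Definition ncross_s (n : R * R) (p : R) : R * R := (n.2 * p, - n.1 * p).
Definition ncross_v (n : R * R) (w : R * R) : R := - n.2 * w.1 + n.1 * w.2.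
(* n x w x n := w - (w.n) n *)
Definition ntang (n : R * R) (w : R * R) : R * R :=
  let s := w.1 * n.1 + w.2 * n.2 in (w.1 - s * n.1, w.2 - s * n.2).

(* ---- functions on the boundary: one function per (open) edge,
        evaluated through the parametrization t in ]0,1[ ---- *)
Definition bfun := 'I_3 -> R -> R * R.
Definition on_edge (t : R) : Prop := 0 < t /\ t < 1.

Definition lincomb (d : nat) (c : 'I_d -> R) (b : 'I_d -> bfun) (i : 'I_3) (t : R)
  : R * R :=
  (\sum_(j < d) c j * (b j i t).1, \sum_(j < d) c j * (b j i t).2).

(* S (a space of boundary functions, up to equality on the boundary)
   has dimension d: it has a basis of d elements. *)
Definition bdim (S : bfun -> Prop) (d : nat) : Prop :=
  exists b : 'I_d -> bfun,
    (forall j, S (b j)) /\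
    (forall c : 'I_d -> R,
        (forall i t, on_edge t -> lincomb c b i t = (0, 0)) -> forall j, c j = 0) /\
    (forall g, S g -> exists c : 'I_d -> R,
        forall i t, on_edge t -> g i t = lincomb c b i t).

Definition Mspace (v : 'I_3 -> R * R) (k : nat) (g : bfun) : Prop :=
  forall i : 'I_3, exists a : nat -> nat -> R,
    forall t, on_edge t -> g i t = ncross_s (enormal v i) (peval k a (epos v i t)).

(* { n x v|_dK : v in P_k(K), curl v = 0 }, curl v = (d_y v, - d_x v) *)
Definition Vtraces (v : 'I_3 -> R * R) (k : nat) (g : bfun) : Prop :=
  exists a : nat -> nat -> R,
    (forall z, (pdy k a z, - pdx k a z) = (0, 0)) /\
    forall i t, on_edge t -> g i t = ncross_s (enormal v i) (peval k a (epos v i t)).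

(* { n x w x n|_dK : w in [P_k(K)]^2, curl w = 0 }, curl w = -d_y w1 + d_x w2 *)
Definition Wtraces (v : 'I_3 -> R * R) (k : nat) (g : bfun) : Prop :=
  exists a1 a2 : nat -> nat -> R,
    (forall z, - pdy k a1 z + pdx k a2 z = 0) /\
    forall i t, on_edge t ->
      g i t = ntang (enormal v i) (peval k a1 (epos v i t), peval k a2 (epos v i t)).

Definition IM_is (v : 'I_3 -> R * R) (k : nat) (z : int) : Prop :=
  exists dM dV dW, [/\ bdim (Mspace v k) dM, bdim (Vtraces v k) dV,
                       bdim (Wtraces v k) dW & z = dM%:Z - dV%:Z - dW%:Z].

End Defs.

From mathcomp Require Import all_boot all_order all_algebra.
From mathcomp Require Import zify ring.
Set Implicit Arguments. Unset Strict Implicit. Unset Printing Implicit Defensive.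
Import Order.TTheory GRing.Theory Num.Theory.
Local Open Scope ring_scope.

(* Each of the three spaces of boundary traces gets an explicit basis.  M(dK) is
   P_k on each of the three edges: dimension 3(k+1).  A curl-free v in P_k is
   constant, so its traces n x v form a line.  A curl-free w in [P_k]^2 is the
   gradient of some phi in P_(k+1), and n x w x n on an edge is the derivative of
   phi along the edge times the unit tangent.  These traces are therefore the edge
   derivatives of continuous piecewise P_(k+1) functions on dK taken modulo the
   constants, a space of dimension 3(k+1) - 1 spanned by two vertex hat functions
   and the edge bubbles l_e l_(e+1)^(m+1), m < k, where the l_j are the barycentric
   coordinates.  Hence I_M = 3(k+1) - 1 - (3k+2) = 0.  Dimensions are unique by the
   exchange lemma, and independence is tested on the open edges, where a polynomial
   vanishing on ]0,1[ is zero. *)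

Lemma sum_pair (V : nmodType) (I J : finType) (F : I * J -> V) :
  \sum_x F x = \sum_i \sum_j F (i, j).
Proof. by rewrite pair_bigA; apply: eq_bigr => -[]. Qed.

Section UnitInterval.
Variable R : rcfType.

Lemma poly_eq0_on_edge (p : {poly R}) : (forall t, on_edge t -> p.[t] = 0) -> p = 0.
Proof.
move=> p0; apply/eqP; apply: contraT => nz_p.
pose rs := [seq ((i.+2)%:R : R)^-1 | i <- iota 0 (size p)].
have rs_roots : all (root p) rs.
  apply/allP => _ /mapP [i _ ->]; apply/rootP/p0; split; first by rewrite invr_gt0 ltr0n.
  by rewrite invf_lt1 ?ltr0n // ltr1n.
have rs_uniq : uniq rs.
  by rewrite map_inj_uniq ?iota_uniq // => i j /invr_inj /eqP; rewrite eqr_nat => /eqP [].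
by have := max_poly_roots nz_p rs_roots rs_uniq; rewrite size_map size_iota ltnn.
Qed.

Lemma poly_eq_on_edge (p q : {poly R}) : (forall t, on_edge t -> p.[t] = q.[t]) -> p = q.
Proof.
move=> pq; apply/eqP; rewrite -subr_eq0; apply/eqP/poly_eq0_on_edge => t /pq.
by rewrite hornerD hornerN => ->; rewrite subrr.
Qed.

Lemma deriv_eq0_const (p : {poly R}) t : p^`() = 0 -> p.[t] = p.[0].
Proof.
move=> p'0; suff -> : p = (p`_0)%:P by rewrite !hornerC.
apply/polyP => -[|i]; rewrite coefC //=.
by have /eqP := congr1 (coefp i) p'0; rewrite /= coef_deriv coef0 mulrn_eq0 => /eqP.
Qed.

Lemma size_polyD_leq n (p q : {poly R}) :
  (size p <= n)%N -> (size q <= n)%N -> (size (p + q)%R <= n)%N.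
Proof. by move=> p_n q_n; apply: leq_trans (size_polyD _ _) _; rewrite geq_max p_n. Qed.

Definition bubble m : {poly R} := (1 - 'X) * 'X^(m.+1).

Lemma horner_bubble_sum n (c : 'I_n -> R) t :
  (\sum_(m < n) c m *: bubble m).[t] = (1 - t) * t * \sum_(m < n) c m * t ^+ m.
Proof.
rewrite horner_sum mulr_sumr; apply: eq_bigr => m _.
by rewrite hornerZ /bubble !hornerE /= exprS; ring.
Qed.

Lemma bubble_expansion n (p : {poly R}) : p.[0] = 0 -> p.[1] = 0 -> (size p <= n.+2)%N ->
  exists c : 'I_n -> R, p = \sum_(m < n) c m *: bubble m.
Proof.
move=> p0 p1 size_p.
have /factor_theorem [q p_q] : root p 0 by apply/rootP.
have /factor_theorem [r q_r] : root q 1.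
  by apply/rootP; move: p1; rewrite p_q hornerM hornerXsubC subr0 mulr1.
have size_r : (size r <= n)%N.
  have [->|r0] := eqVneq r 0; first by rewrite size_poly0.
  move: size_p; rewrite p_q q_r !size_Mmonic ?monicXsubC ?mulf_neq0 ?polyXsubC_eq0 //.
  by rewrite !size_XsubC !addn2.
exists (fun m => - r`_m); apply: poly_eq_on_edge => t _.
rewrite horner_bubble_sum p_q q_r !hornerM !hornerXsubC (horner_coef_wide t size_r).
by rewrite !mulr_suml mulr_sumr; apply: eq_bigr => m _; ring.
Qed.

Lemma on_edge_half : on_edge (2^-1 : R).
Proof. by split; rewrite ?invr_gt0 ?ltr0n // invf_lt1 ?ltr0n // ltr1n. Qed.

Lemma monomial_sum_eq0_on_edge n (c : 'I_n -> R) :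
  (forall t, on_edge t -> \sum_(m < n) c m * t ^+ m = 0) -> forall m, c m = 0.
Proof.
move=> c0 m; have P0 : \sum_(j < n) c j *: 'X^j = 0 :> {poly R}.
  apply: poly_eq0_on_edge => t /c0 <-; rewrite horner_sum.
  by apply: eq_bigr => j _; rewrite hornerZ hornerXn.
by have := congr1 (coefp m) P0; rewrite /= coef_sumMXn coef0 (big_pred1 m).
Qed.

End UnitInterval.

Section BivariatePolynomials.
Variable R : rcfType.
Implicit Types (a b F G : nat -> nat -> R) (z : R * R) (h l : R * R -> R).

Definition tri_sum n F := \sum_(i < n.+1) \sum_(j < n.+1 | (i + j <= n)%N) F i j.

Lemma peval_tri_sum n a z :
  peval n a z = tri_sum n (fun i j => a i j * z.1 ^+ i * z.2 ^+ j).
Proof. by []. Qed.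

Lemma tri_sum_mkcond n F :
  tri_sum n F = \sum_(i < n.+1) \sum_(j < n.+1) (if (i + j <= n)%N then F i j else 0).
Proof. by apply: eq_bigr => i _; rewrite big_mkcond. Qed.

Lemma eq_tri_sum n F G :
  (forall i j, (i + j <= n)%N -> F i j = G i j) -> tri_sum n F = tri_sum n G.
Proof. by move=> FG; apply: eq_bigr => i _; apply: eq_bigr => j; apply: FG. Qed.

Lemma tri_sum_lin n c F G :
  tri_sum n (fun i j => c * F i j + G i j) = c * tri_sum n F + tri_sum n G.
Proof.
rewrite /tri_sum mulr_sumr -big_split; apply: eq_bigr => i _ /=.
by rewrite mulr_sumr -big_split.
Qed.

Lemma tri_sum_shiftx n F :
  (forall j, F 0%N j = 0) -> tri_sum n.+1 F = tri_sum n (fun i j => F i.+1 j).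
Proof.
move=> F0; rewrite !tri_sum_mkcond big_ord_recl big1 ?add0r; last first.
  by move=> j _; rewrite F0 if_same.
apply: eq_bigr => i _; rewrite big_ord_recr /= ifF ?addr0; last by rewrite /bump /=; lia.
by apply: eq_bigr => j _ /=; rewrite /bump /= add1n addSn ltnS.
Qed.

Lemma tri_sum_shifty n F :
  (forall i, F i 0%N = 0) -> tri_sum n.+1 F = tri_sum n (fun i j => F i j.+1).
Proof.
move=> F0; rewrite !tri_sum_mkcond big_ord_recr /= [X in _ + X]big1 ?addr0; last first.
  by move=> [[|j] lt_j] _ /=; [rewrite F0 if_same | rewrite ifF //; lia].
apply: eq_bigr => i _; rewrite big_ord_recl /= F0 if_same add0r.
by apply: eq_bigr => j _ /=; rewrite /bump /= add1n addnS ltnS.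
Qed.

Lemma tri_sum_widen n F :
  (forall i j, (i + j)%N = n.+1 -> F i j = 0) -> tri_sum n.+1 F = tri_sum n F.
Proof.
move=> F0; rewrite !tri_sum_mkcond big_ord_recr /= [X in _ + X]big1 ?addr0; last first.
  by move=> [[|j] lt_j] _ /=; [rewrite F0 ?addn0 // if_same | rewrite ifF //; lia].
apply: eq_bigr => i _; rewrite big_ord_recr /= [X in _ + X](_ : _ = 0) ?addr0.
  apply: eq_bigr => j _ /=; case: (ltngtP (i + j) n.+1) => ij.
  - by rewrite ifT ?ifT //; lia.
  - by rewrite ifF ?ifF //; lia.
  - by rewrite F0 // if_same.
by case: ifP => // ij; apply: F0; lia.
Qed.

Definition coef_dx a i j := a i.+1 j * i.+1%:R.
Definition coef_dy a i j := a i j.+1 * j.+1%:R.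
Definition coef_mulx a i j := if i is i'.+1 then a i' j else 0.
Definition coef_muly a i j := if j is j'.+1 then a i j' else 0.
Definition coef_trunc n a i j := if (i + j <= n)%N then a i j else 0.

Lemma pdx_coef_dx n a z : pdx n.+1 a z = peval n (coef_dx a) z.
Proof.
rewrite [LHS](_ : _ = tri_sum n.+1 (fun i j => a i j * i%:R * z.1 ^+ i.-1 * z.2 ^+ j)) //.
by rewrite tri_sum_shiftx // => j; rewrite mulr0 !mul0r.
Qed.

Lemma pdy_coef_dy n a z : pdy n.+1 a z = peval n (coef_dy a) z.
Proof.
rewrite [LHS](_ : _ = tri_sum n.+1 (fun i j => a i j * j%:R * z.1 ^+ i * z.2 ^+ j.-1)) //.
by rewrite tri_sum_shifty // => i; rewrite mulr0 !mul0r.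
Qed.

Lemma peval_coef_mulx n a z : peval n.+1 (coef_mulx a) z = z.1 * peval n a z.
Proof.
rewrite peval_tri_sum tri_sum_shiftx; last by move=> j; rewrite !mul0r.
rewrite /tri_sum mulr_sumr; apply: eq_bigr => i _; rewrite mulr_sumr.
by apply: eq_bigr => j _ /=; rewrite exprS; ring.
Qed.

Lemma peval_coef_muly n a z : peval n.+1 (coef_muly a) z = z.2 * peval n a z.
Proof.
rewrite peval_tri_sum tri_sum_shifty; last by move=> i; rewrite !mul0r.
rewrite /tri_sum mulr_sumr; apply: eq_bigr => i _; rewrite mulr_sumr.
by apply: eq_bigr => j _ /=; rewrite exprS; ring.
Qed.

Lemma peval_coef_trunc n a z : peval n.+1 (coef_trunc n a) z = peval n a z.
Proof.
rewrite !peval_tri_sum tri_sum_widen => [|i j ij]; last first.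
  by rewrite /coef_trunc ifF ?mul0r //; lia.
by apply: eq_tri_sum => i j ij; rewrite /coef_trunc ij.
Qed.

Lemma peval_lin n c a b z :
  peval n (fun i j => c * a i j + b i j) z = c * peval n a z + peval n b z.
Proof. by rewrite !peval_tri_sum -tri_sum_lin; apply: eq_tri_sum => i j _; ring. Qed.

Lemma peval0 n z : peval n (fun _ _ => 0) z = 0 :> R.
Proof. by apply: big1 => i _; apply: big1 => j _; rewrite !mul0r. Qed.

Lemma peval_deg0 n a z :
  (forall i j, (0 < i + j <= n)%N -> a i j = 0) -> peval n a z = a 0%N 0%N.
Proof.
elim: n => [|n IHn] a0.
  by rewrite /peval big_ord1 big_mkcond big_ord1 /= !mulr1.
rewrite peval_tri_sum tri_sum_widen -?peval_tri_sum.
  by apply: IHn => i j ij; apply: a0; lia.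
by move=> i j ij; rewrite a0 ?mul0r //; lia.
Qed.

Lemma peval_eq0_coef n a :
  (forall z, peval n a z = 0) -> forall i j, (i + j <= n)%N -> a i j = 0.
Proof.
(* For fixed y the coefficient [Ay y i] of x^i vanishes; it is a polynomial in y. *)
move=> a0 i j ij.
pose Ay (y : R) i := \sum_(j < n.+1) (if (i + j <= n)%N then a i j else 0) * y ^+ j.
have Ay0 y i' : (i' < n.+1)%N -> Ay y i' = 0.
  move=> lt_i'; suff /(congr1 (fun p : {poly R} => p`_i')) : \poly_(i < n.+1) Ay y i = 0.
    by rewrite coef_poly lt_i' coef0.
  apply: poly_eq0_on_edge => x _; rewrite horner_poly -[RHS](a0 (x, y)).
  rewrite peval_tri_sum tri_sum_mkcond; apply: eq_bigr => k _.
  rewrite /Ay mulr_suml; apply: eq_bigr => l _.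
  by case: ifP => _ /=; [ring | rewrite !mul0r].
suff /(congr1 (fun p : {poly R} => p`_j)) :
    \poly_(j < n.+1) (if (i + j <= n)%N then a i j else 0) = 0.
  by rewrite coef_poly coef0 ij ifT //; lia.
by apply: poly_eq0_on_edge => y _; rewrite horner_poly -[RHS](Ay0 y i) //; lia.
Qed.

Lemma peval_grad0_const n a z :
  (forall z, pdx n a z = 0) -> (forall z, pdy n a z = 0) -> peval n a z = a 0%N 0%N.
Proof.
case: n => [|n] dx0 dy0; first by rewrite peval_deg0 // => i j; lia.
have dxc0 i j : (i + j <= n)%N -> coef_dx a i j = 0.
  by apply: peval_eq0_coef => z'; rewrite -pdx_coef_dx.
have dyc0 i j : (i + j <= n)%N -> coef_dy a i j = 0.
  by apply: peval_eq0_coef => z'; rewrite -pdy_coef_dy.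
have natr_cancel (x : R) m : x * m.+1%:R = 0 -> x = 0.
  by move/eqP; rewrite mulf_eq0 pnatr_eq0 orbF => /eqP.
apply: peval_deg0 => -[|i] [|j] // ij.
- by apply: (natr_cancel _ j); apply: dyc0; lia.
- by apply: (natr_cancel _ i); apply: dxc0; lia.
- by apply: (natr_cancel _ i); apply: dxc0; lia.
Qed.

Definition coef_const c i j : R := if (i + j == 0)%N then c else 0.

Lemma peval_coef_const n c z : peval n (coef_const c) z = c.
Proof. by rewrite peval_deg0 // => i j ij; rewrite /coef_const ifF //; lia. Qed.

Lemma pdx_coef_const n c z : pdx n (coef_const c) z = 0.
Proof.
by apply: big1 => -[[|i] ?] _; apply: big1 => j _; rewrite /coef_const /= ?mulr0 ?mul0r.
Qed.

Lemma pdy_coef_const n c z : pdy n (coef_const c) z = 0.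
Proof.
apply: big1 => i _; apply: big1 => -[[|j] ?] _; rewrite /coef_const /= ?addn0 ?mulr0 ?mul0r //.
by rewrite addnS !mul0r.
Qed.

Lemma pdx_deg0 a z : pdx 0 a z = 0.
Proof. by rewrite /pdx big_ord1 big_mkcond big_ord1 /= !mulr0 !mul0r. Qed.

Lemma pdy_deg0 a z : pdy 0 a z = 0.
Proof. by rewrite /pdy big_ord1 big_mkcond big_ord1 /= !mulr0 !mul0r. Qed.

Lemma pdy_coef_dx n a z : pdy n (coef_dx a) z = pdx n (coef_dy a) z.
Proof.
case: n => [|n]; first by rewrite pdx_deg0 pdy_deg0.
rewrite pdy_coef_dy pdx_coef_dx !peval_tri_sum.
by apply: eq_tri_sum => i j _; rewrite /coef_dx /coef_dy; ring.
Qed.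

(* The potential is [int_0^x a1(s, y) ds + int_0^y a2(0, s) ds]. *)
Definition potential a1 a2 i j :=
  if i is i'.+1 then a1 i' j / i'.+1%:R
  else if j is j'.+1 then a2 0%N j' / j'.+1%:R else 0.

Lemma curl_free_potential n a1 a2 :
  (forall z, - pdy n a1 z + pdx n a2 z = 0) ->
  (forall z, peval n a1 z = pdx n.+1 (potential a1 a2) z) /\
  (forall z, peval n a2 z = pdy n.+1 (potential a1 a2) z).
Proof.
move=> curl0; have nz m : (m.+1%:R : R) != 0 by rewrite pnatr_eq0.
have sym i j : (i + j < n)%N -> a1 i j.+1 * j.+1%:R = a2 i.+1 j * i.+1%:R.
  case: n curl0 => [//|n] curl0 ij.
  have /eqP : -1 * coef_dy a1 i j + coef_dx a2 i j = 0.
    apply: (@peval_eq0_coef n (fun i j => -1 * coef_dy a1 i j + coef_dx a2 i j)) ij => z.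
    by rewrite peval_lin mulN1r -pdy_coef_dy -pdx_coef_dx curl0.
  by rewrite mulN1r addrC subr_eq0 => /eqP.
split=> z; rewrite ?pdx_coef_dx ?pdy_coef_dy !peval_tri_sum; apply: eq_tri_sum => i j ij.
  by rewrite /coef_dx /potential divfK.
rewrite /coef_dy /potential; case: i ij => [|i] ij; first by rewrite divfK.
by rewrite (mulrAC (a1 i j.+1)) sym ?mulfK //; lia.
Qed.

Definition polyfun n h := exists a, forall z, h z = peval n a z.

Definition affine h := exists al be ga : R, forall z, h z = al * z.1 + be * z.2 + ga.

Lemma polyfun_widen m n h : (m <= n)%N -> polyfun m h -> polyfun n h.
Proof.
move=> /subnK <-; elim: (n - m)%N => [|d IHd] // /IHd [a ha].
by exists (coef_trunc (d + m) a) => z; rewrite ha peval_coef_trunc.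
Qed.

Lemma polyfun_const n c : polyfun n (fun _ => c).
Proof.
apply: (@polyfun_widen 0) => //; exists (fun _ _ => c) => z.
by rewrite peval_deg0 // => i j; lia.
Qed.

Lemma polyfun_mul_affine n l h :
  affine l -> polyfun n h -> polyfun n.+1 (fun z => l z * h z).
Proof.
move=> [al [be [ga l_def]]] [a ha].
(* The trailing [+ 0] lets [peval_lin] split off all three terms. *)
exists (fun i j => al * coef_mulx a i j + (be * coef_muly a i j + (ga * coef_trunc n a i j + 0))).
move=> z; rewrite !peval_lin peval0 peval_coef_mulx peval_coef_muly peval_coef_trunc -ha l_def.
ring.
Qed.

Lemma polyfun_expr_affine m l : affine l -> polyfun m (fun z => l z ^+ m).
Proof.
move=> l_aff; elim: m => [|m [a ha]]; first exact: polyfun_const.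
have [b hb] := polyfun_mul_affine l_aff (ex_intro _ a ha).
by exists b => z; rewrite exprS -hb ha.
Qed.

Lemma polyfun_affine n l : affine l -> polyfun n.+1 l.
Proof.
move=> l_aff; have [a ha] := polyfun_mul_affine l_aff (polyfun_const n 1).
by exists a => z; rewrite -ha mulr1.
Qed.

End BivariatePolynomials.

Lemma val_nxt (i : 'I_3) : nat_of_ord (nxt i) = (i.+1 %% 3)%N.
Proof. by rewrite /nxt inordK // ltn_mod. Qed.

Lemma nxt3 (i : 'I_3) : nxt (nxt (nxt i)) = i.
Proof. by apply: val_inj => /=; rewrite !val_nxt; case: i => [[|[|[|]]] ?]. Qed.

Lemma ord3_cases (j l : 'I_3) : [\/ l = j, l = nxt j | l = nxt (nxt j)].
Proof.
have /or3P [] : [|| l == j, l == nxt j | l == nxt (nxt j)].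
  by rewrite -!(inj_eq val_inj) /= !val_nxt; case: j => [[|[|[|]]] ?]; case: l => [[|[|[|]]] ?].
all: by move/eqP; constructor.
Qed.

Lemma nxt_neq (i : 'I_3) : [/\ nxt i != i, nxt (nxt i) != i & nxt (nxt i) != nxt i].
Proof. by rewrite -!(inj_eq val_inj) /= !val_nxt; case: i => [[|[|[|]]] ?]. Qed.

Section Triangle.
Variables (R : rcfType) (v : 'I_3 -> R * R).
Hypothesis v_nondeg : triangle_nondeg v.
Implicit Types (i j l : 'I_3) (t : R) (z : R * R) (h : R * R -> R) (a : nat -> nat -> R).

Lemma epos_0 i : epos v i 0 = v i.
Proof. by rewrite /epos !mul0r !addr0; case: (v i). Qed.

Lemma epos_1 i : epos v i 1 = v (nxt i).
Proof. by rewrite /epos /edge_dir /vsub /= !mul1r !subrKC; case: (v (nxt i)). Qed.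

Lemma affine_on_edge h i t :
  affine h -> h (epos v i t) = (1 - t) * h (v i) + t * h (v (nxt i)).
Proof. by move=> [al [be [ga h_def]]]; rewrite !h_def /epos /edge_dir /vsub /=; ring. Qed.

Definition area2 j := cross2 (vsub (v (nxt j)) (v j)) (vsub (v (nxt (nxt j))) (v j)).

Lemma area2_nxt j : area2 (nxt j) = area2 j.
Proof. by rewrite /area2 nxt3 /cross2 /vsub /=; ring. Qed.

Lemma area2_neq0 j : area2 j != 0.
Proof.
have area2_0 : area2 ord0 != 0.
  have e1 : nxt ord0 = inord 1 :> 'I_3 by apply/eqP.
  have e2 : nxt (inord 1) = inord 2 :> 'I_3 by apply: ord_inj; rewrite val_nxt !inordK.
  have e0 : ord0 = inord 0 :> 'I_3 by apply: ord_inj; rewrite inordK.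
  by rewrite /area2 e1 e2 e0.
by case: (ord3_cases ord0 j) => ->; rewrite ?area2_nxt.
Qed.

Definition bary j z := cross2 (vsub (v (nxt j)) z) (vsub (v (nxt (nxt j))) z) / area2 j.

Lemma bary_affine j : affine (bary j).
Proof.
rewrite /bary /cross2 /vsub.
set a := v (nxt j); set b := v (nxt (nxt j)); set D := area2 j.
exists ((a.2 - b.2) / D), ((b.1 - a.1) / D), ((a.1 * b.2 - a.2 * b.1) / D) => z /=.
ring.
Qed.

Lemma bary_vertex j l : bary j (v l) = (l == j)%:R.
Proof.
have [n1 n2 _] := nxt_neq j; rewrite /bary /cross2 /vsub.
case: (ord3_cases j l) => ->; rewrite ?eqxx ?(negbTE n1) ?(negbTE n2) ?divff ?area2_neq0 //.
- by rewrite !subrr !mul0r subrr mul0r.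
- by rewrite !subrr !mulr0 subrr mul0r.
Qed.

Lemma bary_on_edge j i t :
  bary j (epos v i t) = (1 - t) * (i == j)%:R + t * (nxt i == j)%:R.
Proof. by rewrite (affine_on_edge _ _ (bary_affine j)) !bary_vertex. Qed.

Lemma bary_nxt_on_edge i t : bary (nxt i) (epos v i t) = t.
Proof.
have [n1 _ _] := nxt_neq i.
by rewrite bary_on_edge eqxx eq_sym (negbTE n1) mulr0 add0r mulr1.
Qed.

Lemma bary_bubble_on_edge e m i t :
  bary e (epos v i t) * bary (nxt e) (epos v i t) ^+ m.+1 = (e == i)%:R * ((1 - t) * t ^+ m.+1).
Proof.
have [/negbTE n1 /negbTE n2 /negbTE n3] := nxt_neq i.
have [n1' n2' n3'] : [/\ (i == nxt i) = false, (i == nxt (nxt i)) = false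
                         & (nxt i == nxt (nxt i)) = false] by split; rewrite eq_sym.
rewrite !bary_on_edge; case: (ord3_cases i e) => ->; rewrite ?eqxx ?n1 ?n2 ?n3 ?n1' ?n2' ?n3'.
- by rewrite !mulr0 !mulr1 addr0 add0r mul1r.
- by rewrite exprS !mulr0 addr0 !mul0r mulr0.
- by rewrite !mulr0 addr0 !mul0r.
Qed.

Definition edge_len2 i := (edge_dir v i).1 ^+ 2 + (edge_dir v i).2 ^+ 2.

Lemma edge_dir_neq0 i : edge_dir v i != (0, 0).
Proof.
apply: contraNneq (area2_neq0 i) => d0.
have [d1 d2] : (v (nxt i)).1 - (v i).1 = 0 /\ (v (nxt i)).2 - (v i).2 = 0 by case: d0.
by rewrite /area2 /cross2 /vsub /= d1 d2 !mul0r subrr.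
Qed.

Lemma edge_len2_gt0 i : 0 < edge_len2 i.
Proof.
rewrite /edge_len2 lt_def addr_ge0 ?sqr_ge0 // andbT paddr_eq0 ?sqr_ge0 //.
rewrite !sqrf_eq0; apply: contra (edge_dir_neq0 i) => /andP [/eqP d1 /eqP d2].
by case: (edge_dir v i) d1 d2 => ? ? /= -> ->.
Qed.

Lemma enormal_scaled i : exists c : R, c ^+ 2 = (edge_len2 i)^-1 /\
  enormal v i = (c * (edge_dir v i).2, c * - (edge_dir v i).1).
Proof.
rewrite /enormal; set s := (if _ then _ else _); set l := Num.sqrt _.
have l2 : l ^+ 2 = edge_len2 i by rewrite sqr_sqrtr // ltW ?edge_len2_gt0.
have s2 : s ^+ 2 = 1 by rewrite /s; case: ifP; rewrite ?sqrrN expr1n.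
exists (s / l); split; first by rewrite exprMn exprVn l2 s2 mul1r.
by congr (_, _); rewrite /=; ring.
Qed.

Definition edge_proj i (s : R) : R * R :=
  (s / edge_len2 i * (edge_dir v i).1, s / edge_len2 i * (edge_dir v i).2).

Lemma ntang_enormal i w :
  ntang (enormal v i) w = edge_proj i (w.1 * (edge_dir v i).1 + w.2 * (edge_dir v i).2).
Proof.
have [c [c2 ->]] := enormal_scaled i; have := edge_len2_gt0 i.
rewrite /edge_proj /ntang /edge_len2 in c2 *; case: (edge_dir v i) c2 => d1 d2 /= c2.
rewrite lt0r => /andP [d0 _]; congr (_, _).
  rewrite (_ : _ - _ = w.1 - c ^+ 2 * (d2 * (w.1 * d2 - w.2 * d1))); last by ring.
  by rewrite c2; field.
rewrite (_ : _ - _ = w.2 + c ^+ 2 * (d1 * (w.1 * d2 - w.2 * d1))); last by ring.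
by rewrite c2; field.
Qed.

Lemma edge_proj_eq0 i s : edge_proj i s = (0, 0) -> s = 0.
Proof.
case=> e1 e2; apply/eqP; apply: contraT => s0.
have sl0 : s / edge_len2 i != 0 by rewrite mulf_neq0 // invr_eq0 gt_eqF ?edge_len2_gt0.
move/eqP: e1; rewrite mulf_eq0 (negbTE sl0) => /eqP d1.
move/eqP: e2; rewrite mulf_eq0 (negbTE sl0) => /eqP d2.
by move: (edge_dir_neq0 i); rewrite /edge_dir /vsub d1 d2 eqxx.
Qed.

Lemma ncross_enormal_eq0 i p : ncross_s (enormal v i) p = (0, 0) -> p = 0.
Proof.
have [c [c2 ->]] := enormal_scaled i; have L0 := edge_len2_gt0 i.
have c0 : c != 0.
  by apply/eqP => c_0; move: c2; rewrite c_0 expr0n /= => /esym/eqP; rewrite invr_eq0 gt_eqF.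
rewrite /ncross_s /= => -[e1 e2].
have /edge_proj_eq0/eqP : edge_proj i (- c * p * edge_len2 i) = (0, 0).
  rewrite /edge_proj mulfK ?gt_eqF // /edge_dir /vsub.
  by congr (_, _); [rewrite -e1 | rewrite -e2] => /=; ring.
by rewrite !mulf_eq0 oppr_eq0 (negbTE c0) (gt_eqF L0) orbF => /eqP.
Qed.

Definition ecoord1 i : {poly R} := (v i).1%:P + (edge_dir v i).1 *: 'X.
Definition ecoord2 i : {poly R} := (v i).2%:P + (edge_dir v i).2 *: 'X.

Definition etrace i n a : {poly R} :=
  \sum_(p < n.+1) \sum_(q < n.+1 | (p + q <= n)%N) a p q *: (ecoord1 i ^+ p * ecoord2 i ^+ q).

Lemma horner_etrace i n a t : (etrace i n a).[t] = peval n a (epos v i t).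
Proof.
rewrite horner_sum; apply: eq_bigr => p _; rewrite horner_sum; apply: eq_bigr => q _.
by rewrite /ecoord1 /ecoord2 !hornerE /= !(mulrC t).
Qed.

Lemma size_affine_poly_leq (c d : R) : (size (c%:P + d *: 'X)%R <= 2)%N.
Proof.
apply: leq_trans (size_polyD _ _) _; rewrite geq_max (leq_trans (size_polyC_leq1 c)) //=.
by rewrite (leq_trans (size_scale_leq _ _)) ?size_polyX.
Qed.

Lemma size_etrace i n a : (size (etrace i n a) <= n.+1)%N.
Proof.
have size_exp m (c d : R) : (size ((c%:P + d *: 'X) ^+ m) <= m.+1)%N.
  apply: leq_trans (size_poly_exp_leq _ _) _; rewrite ltnS.
  by have := size_affine_poly_leq c d; case: size => [|[|[|]]] //= _; rewrite ?mul0n ?mul1n.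
have sum_closed := big_ind (fun p : {poly R} => size p <= n.+1)%N.
apply: (sum_closed) => [||p _]; rewrite ?size_poly0 //; first exact: size_polyD_leq.
apply: sum_closed => [||q pq]; rewrite ?size_poly0 //; first exact: size_polyD_leq.
apply: leq_trans (size_scale_leq _ _) (leq_trans (size_polyMleq _ _) _).
have := size_exp p (v i).1 (edge_dir v i).1; have := size_exp q (v i).2 (edge_dir v i).2.
rewrite /ecoord1 /ecoord2; lia.
Qed.

Lemma horner_deriv_etrace i n a t : (etrace i n a)^`().[t] =
  (edge_dir v i).1 * pdx n a (epos v i t) + (edge_dir v i).2 * pdy n a (epos v i t).
Proof.
have dcoord (c d : R) : (c%:P + d *: 'X)^`() = d%:P.
  by rewrite derivD derivC derivZ derivX add0r alg_polyC.
rewrite /etrace linear_sum horner_sum /pdx /pdy !mulr_sumr -big_split.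
apply: eq_bigr => p _; rewrite linear_sum horner_sum !mulr_sumr -big_split.
apply: eq_bigr => q _ /=; rewrite derivZ derivM !deriv_exp /ecoord1 /ecoord2 !dcoord.
rewrite !(hornerZ, hornerD, hornerM, hornerMn, horner_exp, hornerC, hornerX) /= !mulr_natr.
by rewrite !(mulrC t); ring.
Qed.

End Triangle.

Section BoundaryDimension.
Variable R : rcfType.
Implicit Types (S : bfun R -> Prop) (g : bfun R).

Definition lincombT (I : finType) (c : I -> R) (b : I -> bfun R) (i : 'I_3) (t : R) :=
  (\sum_x c x * (b x i t).1, \sum_x c x * (b x i t).2).

Lemma lincomb_lincombT d (c : 'I_d -> R) (b : 'I_d -> bfun R) : lincomb c b = lincombT c b.
Proof. by []. Qed.

Lemma lincombT_span (I J : finType) (b : I -> bfun R) (b' : J -> bfun R)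
    (C : I -> J -> R) (c : I -> R) i t :
  (forall x, b x i t = lincombT (C x) b' i t) ->
  lincombT c b i t = lincombT (fun y => \sum_x c x * C x y) b' i t.
Proof.
move=> bC; rewrite /lincombT; congr (_, _);
  under eq_bigr => x _ do rewrite bC /= mulr_sumr;
  by rewrite exchange_big; apply: eq_bigr => y _; rewrite mulr_suml; apply: eq_bigr => x _;
     rewrite mulrA.
Qed.

Lemma free_span_leq m n (b : 'I_m -> bfun R) (b' : 'I_n -> bfun R) :
  (forall c, (forall i t, on_edge t -> lincomb c b i t = (0, 0)) -> forall j, c j = 0) ->
  (forall j, exists c, forall i t, on_edge t -> b j i t = lincomb c b' i t) ->
  (m <= n)%N.
Proof.
move=> b_free /fin_all_exists [C bC].
pose A : 'M[R]_(m, n) := \matrix_(j, l) C j l.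
suff /inj_row_free : forall u : 'rV_m, u *m A = 0 -> u = 0.
  by rewrite -row_leq_rank => /leq_trans; apply; apply: rank_leq_col.
move=> u uA; apply/rowP => j; rewrite mxE; apply: b_free => i t t_edge.
rewrite lincomb_lincombT (lincombT_span _ (fun x => bC x i t t_edge)).
have uA0 l : \sum_x u 0 x * C x l = 0.
  have /rowP/(_ l) := uA; rewrite !mxE => uAl; rewrite -[RHS]uAl.
  by apply: eq_bigr => x _; rewrite mxE.
by rewrite /lincombT !big1 // => l _; rewrite uA0 mul0r.
Qed.

Lemma bdim_unique S d1 d2 : bdim S d1 -> bdim S d2 -> d1 = d2.
Proof.
move=> [b1 [S_b1 [free1 span1]]] [b2 [S_b2 [free2 span2]]]; apply/eqP; rewrite eqn_leq.
rewrite (free_span_leq free1 (fun j => span2 _ (S_b1 j))).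
by rewrite (free_span_leq free2 (fun j => span1 _ (S_b2 j))).
Qed.

Lemma bdim_card S (I : finType) (b : I -> bfun R) :
  (forall x, S (b x)) ->
  (forall c, (forall i t, on_edge t -> lincombT c b i t = (0, 0)) -> forall x, c x = 0) ->
  (forall g, S g -> exists c, forall i t, on_edge t -> g i t = lincombT c b i t) ->
  bdim S #|I|.
Proof.
move=> S_b b_free b_span; exists (b \o enum_val); split; first by move=> j; apply: S_b.
have reindex_comb c i t : lincomb c (b \o enum_val) i t = lincombT (c \o enum_rank) b i t.
  by rewrite /lincomb /lincombT; congr (_, _);
     rewrite [RHS](reindex enum_val (onW_bij _ (enum_val_bij _))) /=;
     apply: eq_bigr => j _; rewrite enum_valK.
split.
  move=> c c0 j; rewrite -[j]enum_valK; apply: (b_free (c \o enum_rank)) => i t t_edge.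
  by rewrite -reindex_comb c0.
move=> g /b_span [c g_c]; exists (c \o enum_val) => i t t_edge.
rewrite g_c // reindex_comb /lincombT.
by congr (_, _); apply: eq_bigr => x _ /=; rewrite enum_rankK.
Qed.

End BoundaryDimension.

Section EdgewisePolynomials.
Variables (R : rcfType) (v : 'I_3 -> R * R).
Hypothesis v_nondeg : triangle_nondeg v.
Variable k : nat.

Definition Mbasis (x : 'I_3 * 'I_k.+1) : bfun R :=
  fun i t => if i == x.1 then ncross_s (enormal v i) (t ^+ x.2) else (0, 0).

Lemma lincombT_Mbasis c i t :
  lincombT c Mbasis i t = ncross_s (enormal v i) (\sum_(m < k.+1) c (i, m) * t ^+ m).
Proof.
have off_edge e : e != i -> forall m, Mbasis (e, m) i t = (0, 0).
  by move=> ne m; rewrite /Mbasis eq_sym (negbTE ne).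
rewrite /lincombT /ncross_s !sum_pair; congr (_, _);
  rewrite (bigD1 i) //= [X in _ + X]big1 ?addr0 => [|e ne];
  try by apply: big1 => m _; rewrite off_edge // mulr0.
all: by rewrite mulr_sumr; apply: eq_bigr => m _; rewrite /Mbasis eqxx /ncross_s /=; ring.
Qed.
Lemma Mbasis_mem x : Mspace v k (Mbasis x).
Proof.
move=> i; case: (eqVneq i x.1) => [->|ne].
  have := polyfun_expr_affine x.2 (bary_affine v (nxt x.1)).
  move=> /(polyfun_widen (ltnSE (ltn_ord x.2))) [a ha].
  by exists a => t _; rewrite /Mbasis eqxx -ha bary_nxt_on_edge.
by exists (fun _ _ => 0) => t _; rewrite /Mbasis (negbTE ne) peval0 /ncross_s !mulr0.
Qed.

Lemma Mbasis_free c :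
  (forall i t, on_edge t -> lincombT c Mbasis i t = (0, 0)) -> forall x, c x = 0.
Proof.
move=> c0 [i m]; apply: (monomial_sum_eq0_on_edge (c := fun m => c (i, m))) => t t_edge.
by apply: (ncross_enormal_eq0 v_nondeg (i := i)); rewrite -lincombT_Mbasis c0.
Qed.

Lemma Mbasis_span g :
  Mspace v k g -> exists c, forall i t, on_edge t -> g i t = lincombT c Mbasis i t.
Proof.
move=> /fin_all_exists [a g_a].
exists (fun x : 'I_3 * 'I_k.+1 => (etrace v x.1 k (a x.1))`_x.2) => i t t_edge.
by rewrite lincombT_Mbasis g_a // -horner_etrace (horner_coef_wide _ (size_etrace _ _ _ _)).
Qed.

Lemma bdim_M : bdim (Mspace v k) (3 * k.+1).
Proof.
have -> : (3 * k.+1)%N = #|{: 'I_3 * 'I_k.+1}| by rewrite card_prod !card_ord.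
exact: bdim_card Mbasis_mem Mbasis_free Mbasis_span.
Qed.

End EdgewisePolynomials.

Section CurlFreeScalars.
Variables (R : rcfType) (v : 'I_3 -> R * R).
Hypothesis v_nondeg : triangle_nondeg v.
Variable k : nat.

Definition Vbasis (x : 'I_1) : bfun R := fun i _ => ncross_s (enormal v i) 1.

Lemma lincombT_Vbasis c i t : lincombT c Vbasis i t = ncross_s (enormal v i) (c ord0).
Proof. by rewrite /lincombT !big_ord1 /ncross_s /=; congr (_, _); ring. Qed.

Lemma Vbasis_mem x : Vtraces v k (Vbasis x).
Proof.
exists (coef_const 1); split => [z | i t _]; last by rewrite peval_coef_const.
by rewrite pdx_coef_const pdy_coef_const oppr0.
Qed.

Lemma Vbasis_free c :
  (forall i t, on_edge t -> lincombT c Vbasis i t = (0, 0)) -> forall x, c x = 0.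
Proof.
move=> c0 x; rewrite (ord1 x); apply: (ncross_enormal_eq0 v_nondeg (i := ord0)).
by rewrite -(lincombT_Vbasis c ord0 2^-1); apply: c0; apply: on_edge_half.
Qed.

Lemma Vbasis_span g :
  Vtraces v k g -> exists c, forall i t, on_edge t -> g i t = lincombT c Vbasis i t.
Proof.
move=> [a [curl0 g_a]]; exists (fun _ => a 0%N 0%N) => i t t_edge.
have dx0 z : pdx k a z = 0 by case: (curl0 z) => _ /eqP; rewrite oppr_eq0 => /eqP.
have dy0 z : pdy k a z = 0 by case: (curl0 z).
by rewrite g_a // lincombT_Vbasis peval_grad0_const.
Qed.

Lemma bdim_V : bdim (Vtraces v k) 1.
Proof. by rewrite -[1%N]card_ord; exact: bdim_card Vbasis_mem Vbasis_free Vbasis_span. Qed.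

End CurlFreeScalars.

Section CurlFreeVectors.
Variables (R : rcfType) (v : 'I_3 -> R * R).
Hypothesis v_nondeg : triangle_nondeg v.
Variable k : nat.
Implicit Types (f : nat -> nat -> R) (g : bfun R) (i j e : 'I_3) (b : bool) (t : R).

Definition tgrad_trace f i t : R * R := edge_proj v i ((etrace v i k.+1 f)^`().[t]).

Lemma Wtraces_tgradP g :
  Wtraces v k g <-> exists f, forall i t, on_edge t -> g i t = tgrad_trace f i t.
Proof.
split=> [[a1 [a2 [curl0 g_a]]] | [f g_f]].
  have [dx dy] := curl_free_potential curl0.
  exists (potential a1 a2) => i t t_edge.
  rewrite g_a // ntang_enormal // /tgrad_trace horner_deriv_etrace -dx -dy.
  by congr edge_proj; rewrite /=; ring.
exists (coef_dx f), (coef_dy f); split => [z | i t t_edge]; first by rewrite pdy_coef_dx addNr.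
rewrite g_f // /tgrad_trace horner_deriv_etrace -pdx_coef_dx -pdy_coef_dy ntang_enormal //.
by congr edge_proj; rewrite /=; ring.
Qed.

(* Potentials are normalised to vanish at the third vertex, so two hat
   functions account for all vertex values. *)
Definition hat_vertex b : 'I_3 := if b then nxt ord0 else ord0.
Definition hat_value b j : R := (j == hat_vertex b)%:R.
Definition hat_trace b i : {poly R} :=
  (hat_value b i)%:P + (hat_value b (nxt i) - hat_value b i) *: 'X.

Definition Wpot_trace (x : bool + 'I_3 * 'I_k) i : {poly R} :=
  match x with inl b => hat_trace b i | inr (e, m) => (e == i)%:R *: bubble R m end.

Definition Wbasis x i t : R * R := edge_proj v i ((Wpot_trace x i)^`().[t]).

Definition Wpot (x : bool + 'I_3 * 'I_k) : R * R -> R :=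
  match x with
  | inl b => bary v (hat_vertex b)
  | inr (e, m) => fun z => bary v e z * bary v (nxt e) z ^+ m.+1
  end.

Lemma Wpot_polyfun x : polyfun k.+1 (Wpot x).
Proof.
case: x => [b|[e m]]; first exact/polyfun_affine/bary_affine.
have := polyfun_expr_affine m.+1 (bary_affine v (nxt e)).
move=> /(polyfun_mul_affine (bary_affine v e)); apply: polyfun_widen.
by have := ltn_ord m; lia.
Qed.

Lemma Wpot_on_edge x i t : Wpot x (epos v i t) = (Wpot_trace x i).[t].
Proof.
case: x => [b|[e m]] /=; last by rewrite bary_bubble_on_edge // hornerZ /bubble !hornerE /= exprS.
by rewrite bary_on_edge // /hat_trace /hat_value !hornerE /= (eq_sym i) (eq_sym (nxt i)); ring.
Qed.

Lemma Wbasis_mem x : Wtraces v k (Wbasis x).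
Proof.
apply/Wtraces_tgradP; have [a a_pot] := Wpot_polyfun x; exists a => i t _.
rewrite /Wbasis /tgrad_trace (_ : Wpot_trace x i = etrace v i k.+1 a) //.
by apply: poly_eq_on_edge => s _; rewrite horner_etrace -a_pot Wpot_on_edge.
Qed.

Lemma sum_Wtpoly (c : bool + 'I_3 * 'I_k -> R) i : \sum_x c x *: Wpot_trace x i =
  \sum_b c (inl b) *: hat_trace b i + \sum_(m < k) c (inr (i, m)) *: bubble R m.
Proof.
rewrite big_sumType /=; congr (_ + _); rewrite sum_pair (bigD1 i) //= [X in _ + X]big1 ?addr0.
  by apply: eq_bigr => m _; rewrite eqxx scale1r.
by move=> e ne; apply: big1 => m _; rewrite (negbTE ne) scale0r scaler0.
Qed.

Lemma lincombT_Wbasis c i t :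
  lincombT c Wbasis i t = edge_proj v i ((\sum_x c x *: Wpot_trace x i)^`().[t]).
Proof.
rewrite linear_sum horner_sum /lincombT /edge_proj; congr (_, _); rewrite !mulr_suml;
by apply: eq_bigr => x _; rewrite linearZ /= hornerZ /Wbasis /edge_proj /=; ring.
Qed.

Definition hat_sum (u : bool -> R) j := \sum_b u b * hat_value b j.

Lemma hat_sum_vertex u b : hat_sum u (hat_vertex b) = u b.
Proof.
have [/negbTE n1 _ _] := nxt_neq ord0.
rewrite /hat_sum big_bool /hat_value.
by case: b; rewrite eqxx /hat_vertex ?n1 ?(eq_sym ord0 (nxt ord0)) ?n1 /=; ring.
Qed.

Lemma hat_sum_last u : hat_sum u (nxt (nxt ord0)) = 0.
Proof.
have [_ /negbTE n2 /negbTE n3] := nxt_neq ord0.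
by rewrite /hat_sum big_bool /hat_value /= n2 n3 !mulr0 addr0.
Qed.

Lemma hat_interp (u : 'I_3 -> R) j :
  hat_sum (fun b => u (hat_vertex b) - u (nxt (nxt ord0))) j = u j - u (nxt (nxt ord0)).
Proof.
case: (ord3_cases ord0 j) => ->; last by rewrite hat_sum_last subrr.
- exact: (hat_sum_vertex _ false).
- exact: (hat_sum_vertex _ true).
Qed.

Lemma hat_sum_cycle_eq0 u : (forall i, hat_sum u (nxt i) = hat_sum u i) -> forall b, u b = 0.
Proof.
move=> cycle b; rewrite -(hat_sum_vertex u b).
have w0 := hat_sum_last u.
case: (ord3_cases (nxt (nxt ord0)) (hat_vertex b)) => ->; first exact: w0.
- by rewrite cycle.
- by rewrite 2!cycle.
Qed.

Lemma horner_hat_trace_sum u i :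
  (\sum_b u b *: hat_trace b i).[0] = hat_sum u i /\
  (\sum_b u b *: hat_trace b i).[1] = hat_sum u (nxt i).
Proof.
by split; rewrite horner_sum; apply: eq_bigr => b _; rewrite hornerZ /hat_trace !hornerE /=; ring.
Qed.

Lemma Wbasis_free c :
  (forall i t, on_edge t -> lincombT c Wbasis i t = (0, 0)) -> forall x, c x = 0.
Proof.
move=> c0; pose G i := \sum_x c x *: Wpot_trace x i.
have G_const i t : (G i).[t] = (G i).[0].
  apply/deriv_eq0_const/poly_eq0_on_edge => s s_edge.
  by apply: (edge_proj_eq0 v_nondeg (i := i)); rewrite -lincombT_Wbasis c0.
have G_vertex i : (G i).[0] = hat_sum (c \o inl) i /\ (G i).[1] = hat_sum (c \o inl) (nxt i).
  have [h0 h1] := horner_hat_trace_sum (c \o inl) i.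
  by rewrite /G sum_Wtpoly !hornerD !horner_bubble_sum h0 h1 subrr !mulr0 !mul0r !addr0.
have c_inl b : c (inl b) = 0.
  by apply: (hat_sum_cycle_eq0 (u := c \o inl)) => i; have [<- <-] := G_vertex i.
case=> [b|[e m]]; first exact: c_inl.
apply: (monomial_sum_eq0_on_edge (c := fun m => c (inr (e, m)))) => t [t0 t1].
have : (G e).[t] = 0.
  by rewrite G_const (proj1 (G_vertex e)) /hat_sum big1 // => b _; rewrite /= c_inl mul0r.
rewrite /G sum_Wtpoly big1 ?add0r => [|b _]; last by rewrite c_inl scale0r.
rewrite horner_bubble_sum => /eqP.
by rewrite !mulf_eq0 subr_eq0 eq_sym (lt_eqF t1) (gt_eqF t0) /= => /eqP.
Qed.

Lemma size_hat_trace_sum u i : (size (\sum_b u b *: hat_trace b i)%R <= 2)%N.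
Proof.
rewrite big_bool /=; apply: size_polyD_leq; apply: leq_trans (size_scale_leq _ _) _;
  exact: size_affine_poly_leq.
Qed.

Lemma Wbasis_span g :
  Wtraces v k g -> exists c, forall i t, on_edge t -> g i t = lincombT c Wbasis i t.
Proof.
move=> /Wtraces_tgradP [f g_f].
pose u j := peval k.+1 f (v j); pose uh b := u (hat_vertex b) - u (nxt (nxt ord0)).
pose Q i := etrace v i k.+1 f - (u (nxt (nxt ord0)))%:P - \sum_b uh b *: hat_trace b i.
have Q_bubbles i : exists r : 'I_k -> R, Q i = \sum_(m < k) r m *: bubble R m.
  have [h0 h1] := horner_hat_trace_sum uh i.
  apply: bubble_expansion.
  - by rewrite !(hornerD, hornerN, hornerC) h0 hat_interp horner_etrace epos_0 subrr.
  - by rewrite !(hornerD, hornerN, hornerC) h1 hat_interp horner_etrace epos_1 subrr.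
  apply: size_polyD_leq; last by rewrite size_polyN (leq_trans (size_hat_trace_sum _ _)).
  apply: size_polyD_leq; first exact: size_etrace.
  by rewrite size_polyN (leq_trans (size_polyC_leq1 _)).
have [r Q_r] := fin_all_exists Q_bubbles.
exists (fun x => match x with inl b => uh b | inr (e, m) => r e m end).
move=> i t t_edge; rewrite g_f // lincombT_Wbasis sum_Wtpoly /= -Q_r /Q /tgrad_trace.
by rewrite addrC subrK derivB derivC subr0.
Qed.

Lemma bdim_W : bdim (Wtraces v k) (3 * k + 2).
Proof.
have -> : (3 * k + 2)%N = #|{: bool + 'I_3 * 'I_k}|.
  by rewrite card_sum card_bool card_prod !card_ord addnC.
exact: bdim_card Wbasis_mem Wbasis_free Wbasis_span.
Qed.

End CurlFreeVectors.

Theorem lemma5p2 (R : rcfType) (v : 'I_3 -> R * R) (k : nat) :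
  triangle_nondeg v -> (1 <= k)%N ->
  IM_is v k 0 /\ (forall z : int, IM_is v k z -> z = 0).
Proof.
(* The count also works for k = 0. *)
move=> v_nondeg _.
have dimM := bdim_M v_nondeg k; have dimV := bdim_V v_nondeg k; have dimW := bdim_W v_nondeg k.
split; first by exists (3 * k.+1)%N, 1%N, (3 * k + 2)%N; split => //; lia.
move=> z [dM [dV [dW [hM hV hW ->]]]].
by rewrite -(bdim_unique dimM hM) -(bdim_unique dimV hV) -(bdim_unique dimW hW); lia.
Qed.
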